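(* Consider a run of Algorithm 3 (described in the context) under the Standing Assumption and Matrix Assumption of the context, and let $g_{\max}>0$. If the stochastic gradient estimates satisfy $\|\bar g_k-g_k\|_2\le g_{\max}$ for all $k\in\mathbb{N}$, then the sequence $\{\bar u_k\}$ is bounded, and there exist $\bar k_\tau\in\mathbb{N}$ and $\bar\tau_{\min}>0$ such that $\bar\tau_k=\bar\tau_{\min}$ for all $k\ge\bar k_\tau$.
   Context: Problem: $\min_x f(x)$ s.t. $c(x)=0$, $f(x)=\mathbb{E}[F(x,\omega)]$, $c:\mathbb{R}^n\to\mathbb{R}^m$ deterministic. Notation: $g_k=\nabla f(x_k)$, $c_k=c(x_k)$, $J_k=\nabla c(x_k)^T$; $\Delta q(x,\tau,g,H,d)=-\tau(g^Td+\frac12\max\{d^THd,0\})+\|c(x)\|_1$. Standing Assumption: there is an open convex set $\mathcal X$ containing all iterates; $f$ is $C^1$ and bounded below on $\mathcal X$ with $\nabla f$ bounded and $L$-Lipschitz on $\mathcal X$; $c$ and $\nabla c^T$ bounded on $\mathcal X$; each $\nabla c_i$ is $\gamma_i$-Lipschitz on $\mathcal X$; singular values of $\nabla c(x)^T$ bounded away from zero uniformly over $\mathcal X$. $\Gamma:=\sum_i\gamma_i$. Matrix Assumption: deterministic symmetric $H_k$ with $\|H_k\|_2\le\kappa_H$ and $u^TH_ku\ge\zeta\|u\|_2^2$ whenever $J_ku=0$. Algorithm 3 (inputs $x_0$, $\bar\tau_{-1}>0$, $\epsilon,\sigma\in(0,1)$, $\bar\xi_{-1}>0$, $\{\beta_k\}\subset(0,1]$,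 $\theta\ge0$): at iteration $k$, obtain stochastic gradient $\bar g_k$; $(\bar d_k,\bar y_k)$ solves $H_k\bar d_k+J_k^T\bar y_k=-\bar g_k$, $J_k\bar d_k=-c_k$ (assumed $\bar d_k\neq0$). $\bar\tau_k^{trial}=\infty$ if $\bar g_k^T\bar d_k+\max\{\bar d_k^TH_k\bar d_k,0\}\le0$, else $\frac{(1-\sigma)\|c_k\|_1}{\bar g_k^T\bar d_k+\max\{\bar d_k^TH_k\bar d_k,0\}}$; $\bar\tau_k=\bar\tau_{k-1}$ if $\bar\tau_{k-1}\le\bar\tau_k^{trial}$, else $(1-\epsilon)\bar\tau_k^{trial}$. $\bar\xi_k^{trial}=\frac{\Delta q(x_k,\bar\tau_k,\bar g_k,H_k,\bar d_k)}{\bar\tau_k\|\bar d_k\|_2^2}$; $\bar\xi_k=\bar\xi_{k-1}$ if $\bar\xi_{k-1}\le\bar\xi_k^{trial}$, else $(1-\epsilon)\bar\xi_k^{trial}$. With $D_k=(\bar\tau_kL+\Gamma)\|\bar d_k\|_2^2$, $\hat a_k=\beta_k\Delta q(x_k,\bar\tau_k,\bar g_k,H_k,\bar d_k)/D_k$, $\tilde a_k=\hat a_k-4\|c_k\|_1/D_k$, project both onto $[a_k,a_k+\theta\beta_k^2]$ with $a_k=\frac{\beta_k\bar\xi_k\bar\tau_k}{\bar\tau_kL+\Gamma}$ to get $\widehat\alpha_k,\widetilde\alpha_k$; $\bar\alpha_k=\widehat\alpha_k$ if $\widehat\alpha_k<1$, $1$ if $\widetilde\alpha_k\le1\le\widehat\alpha_k$,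 $\widetilde\alpha_k$ if $\widetilde\alpha_k>1$; $x_{k+1}=x_k+\bar\alpha_k\bar d_k$. Decomposition: $\bar d_k=\bar u_k+v_k$ with $\bar u_k\in\mathrm{Null}(J_k)$, $v_k\in\mathrm{Range}(J_k^T)$. *)

From HB Require Import structures.
From mathcomp Require Import all_boot all_order all_algebra.
From mathcomp Require Import all_classical all_reals all_analysis.
Set Implicit Arguments. Unset Strict Implicit. Unset Printing Implicit Defensive.
Import Order.TTheory GRing.Theory Num.Theory.
Import numFieldNormedType.Exports.
Local Open Scope ring_scope.

Section Defs.
Variable R : realType.

Definition dotv (n : nat) (u v : 'cV[R]_n) : R := \sum_(i < n) u i 0 * v i 0.
Definition norm2 (n : nat) (v : 'cV[R]_n) : R := Num.sqrt (dotv v v).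
Definition norm1 (n : nat) (v : 'cV[R]_n) : R := \sum_(i < n) `|v i 0|.

(* all singular values of J (m x n) are >= s, i.e. sigma_min(J) >= s,
   via the variational characterisation  ||J^T y||_2 >= s ||y||_2. *)
Definition sing_vals_ge (m n : nat) (J : 'M[R]_(m, n)) (s : R) : Prop :=
  forall y : 'cV[R]_m, s * norm2 y <= norm2 (J^T *m y).

Definition opnorm2_le (n : nat) (H : 'M[R]_n) (k : R) : Prop :=
  forall v : 'cV[R]_n, norm2 (H *m v) <= k * norm2 v.

Definition dq (n m : nat) (tau : R) (g : 'cV[R]_n) (H : 'M[R]_n)
  (d : 'cV[R]_n) (cx : 'cV[R]_m) : R :=
  - tau * (dotv g d + 2^-1 * Num.max (dotv d (H *m d)) 0) + norm1 cx.

(* value at index k of a sequence whose "index -1" value is init *)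
Definition prevv (init : R) (s : nat -> R) (k : nat) : R :=
  match k with 0%N => init | k'.+1 => s k' end.

(* merit parameter update; tau_trial = +oo when den <= 0 *)
Definition tau_update (eps sigma tau_prev : R) (n m : nat) (g : 'cV[R]_n)
  (H : 'M[R]_n) (d : 'cV[R]_n) (cx : 'cV[R]_m) : R :=
  let den := dotv g d + Num.max (dotv d (H *m d)) 0 in
  if den <= 0 then tau_prev
  else let trial := (1 - sigma) * norm1 cx / den in
       if tau_prev <= trial then tau_prev else (1 - eps) * trial.

Definition xi_update (eps xi_prev trial : R) : R :=
  if xi_prev <= trial then xi_prev else (1 - eps) * trial.

Definition proj_int (lo hi z : R) : R := Num.min hi (Num.max lo z).

Definition alpha_sel (n m : nat) (L Gam theta beta tau xi : R) (g : 'cV[R]_n)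
  (H : 'M[R]_n) (d : 'cV[R]_n) (cx : 'cV[R]_m) : R :=
  let D := (tau * L + Gam) * norm2 d ^+ 2 in
  let ahat := beta * dq tau g H d cx / D in
  let atil := ahat - 4 * norm1 cx / D in
  let a := beta * xi * tau / (tau * L + Gam) in
  let alhat := proj_int a (a + theta * beta ^+ 2) ahat in
  let altil := proj_int a (a + theta * beta ^+ 2) atil in
  if alhat < 1 then alhat else if altil <= 1 then 1 else altil.

End Defs.

From HB Require Import structures.
From mathcomp Require Import all_boot all_order all_algebra.
From mathcomp Require Import all_classical all_reals all_analysis.
From mathcomp Require Import ring lra.
Import Order.TTheory GRing.Theory Num.Theory.
Import numFieldNormedType.Exports.
Local Open Scope ring_scope.
Set Implicit Arguments. Unset Strict Implicit. Unset Printing Implicit Defensive.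

(* Write d_k = u_k + v_k with J_k u_k = 0 and v_k = J_k^T w.  Since J_k v_k = -c_k,
   the singular value bound gives s |v_k| <= |c_k|; since J_k u_k = 0, the Newton
   equation gives zeta |u_k|^2 <= u_k^T H_k u_k = -u_k^T (gbar_k + H_k v_k).  With
   gbar_k and c_k bounded, u_k, v_k, d_k and the multipliers y_k are bounded, and
   then gbar_k^T d_k + max(d_k^T H_k d_k, 0) = c_k^T y_k - min(d_k^T H_k d_k, 0)
   is at most Cd |c_k|_1.  So every trial value is at least (1 - sigma) / Cd, the
   merit parameter stays above a positive constant, and as each decrease is by a
   factor (1 - eps) only finitely many decreases happen. *)

Section Euclidean.
Variable R : realType.
Implicit Types (n : nat).

Lemma dotvC n (u v : 'cV[R]_n) : dotv u v = dotv v u.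
Proof. by apply: eq_bigr => i _; rewrite mulrC. Qed.

Lemma dotvDl n (u w v : 'cV[R]_n) : dotv (u + w) v = dotv u v + dotv w v.
Proof. by rewrite /dotv -big_split; apply: eq_bigr => i _; rewrite !mxE mulrDl. Qed.

Lemma dotvZl n a (u v : 'cV[R]_n) : dotv (a *: u) v = a * dotv u v.
Proof. by rewrite /dotv mulr_sumr; apply: eq_bigr => i _; rewrite !mxE mulrA. Qed.

Lemma dotvNl n (u v : 'cV[R]_n) : dotv (- u) v = - dotv u v.
Proof. by rewrite -scaleN1r dotvZl mulN1r. Qed.

Lemma dotvDr n (u w v : 'cV[R]_n) : dotv v (u + w) = dotv v u + dotv v w.
Proof. by rewrite dotvC dotvDl !(dotvC v). Qed.

Lemma dotvZr n a (u v : 'cV[R]_n) : dotv v (a *: u) = a * dotv v u.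
Proof. by rewrite dotvC dotvZl dotvC. Qed.

Lemma dotvNr n (u v : 'cV[R]_n) : dotv v (- u) = - dotv v u.
Proof. by rewrite dotvC dotvNl dotvC. Qed.

Lemma dotv0l n (v : 'cV[R]_n) : dotv 0 v = 0.
Proof. by rewrite -(scale0r 0) dotvZl mul0r. Qed.

Lemma dotv_mulmx p q (A : 'M[R]_(p, q)) (u : 'cV[R]_p) (v : 'cV[R]_q) :
  dotv u (A *m v) = dotv (A^T *m u) v.
Proof.
rewrite /dotv; under eq_bigr => i _ do rewrite mxE mulr_sumr.
rewrite exchange_big /=; apply: eq_bigr => j _.
rewrite mxE mulr_suml; apply: eq_bigr => i _.
by rewrite !mxE mulrA [u i 0 * _]mulrC.
Qed.

Lemma dotvv_ge0 n (u : 'cV[R]_n) : 0 <= dotv u u.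
Proof. by apply: sumr_ge0 => i _; rewrite -expr2 sqr_ge0. Qed.

Lemma norm2_ge0 n (u : 'cV[R]_n) : 0 <= norm2 u.
Proof. exact: sqrtr_ge0. Qed.

Lemma sqr_norm2 n (u : 'cV[R]_n) : norm2 u ^+ 2 = dotv u u.
Proof. by rewrite sqr_sqrtr // dotvv_ge0. Qed.

Lemma norm2N n (u : 'cV[R]_n) : norm2 (- u) = norm2 u.
Proof. by rewrite /norm2 dotvNl dotvNr opprK. Qed.

Lemma sqr_dotv_le n (u v : 'cV[R]_n) : dotv u v ^+ 2 <= dotv u u * dotv v v.
Proof.
set A := dotv u u; set B := dotv u v; set C := dotv v v.
have expand (w w' : 'cV[R]_n) :
    dotv (w + w') (w + w') = dotv w w + 2 * dotv w w' + dotv w' w'.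
  by rewrite !(dotvDl, dotvDr) (dotvC w' w); ring.
(* [C (AC - B^2)] and [A (AC - B^2)] are squared norms, and so are [A +- 2B + C] *)
have := dotvv_ge0 (C *: u + (- B) *: v).
have := dotvv_ge0 (B *: u + (- A) *: v).
have := dotvv_ge0 (u + v); have := dotvv_ge0 (u + - v).
rewrite !expand !(dotvZl, dotvZr, dotvNl, dotvNr) ?(dotvC v u) -/A -/B -/C.
have := dotvv_ge0 u; have := dotvv_ge0 v; rewrite -/A -/C.
have [Cp|C0] := ltrP 0 C; first nra.
have [Ap|A0] := ltrP 0 A; nra.
Qed.

Lemma cauchy_schwarz n (u v : 'cV[R]_n) : `|dotv u v| <= norm2 u * norm2 v.
Proof.
rewrite -sqrtrM ?dotvv_ge0 // -sqrtr_sqr ler_sqrt ?sqr_dotv_le //.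
by rewrite mulr_ge0 ?dotvv_ge0.
Qed.

Lemma dotv_le n (u v : 'cV[R]_n) : dotv u v <= norm2 u * norm2 v.
Proof. exact: ler_normlW (cauchy_schwarz u v). Qed.

Lemma ler_norm2D n (u v : 'cV[R]_n) : norm2 (u + v) <= norm2 u + norm2 v.
Proof.
rewrite -ler_sqr ?nnegrE ?addr_ge0 ?norm2_ge0 //.
rewrite sqrrD !sqr_norm2 !(dotvDl, dotvDr) (dotvC v u).
have := dotv_le u v; lra.
Qed.

Lemma ler_norm2B n (u v : 'cV[R]_n) : norm2 (u - v) <= norm2 u + norm2 v.
Proof. by rewrite -(norm2N v) ler_norm2D. Qed.

Lemma opnorm2_leW n (H : 'M[R]_n) k k' :
  k <= k' -> opnorm2_le H k -> opnorm2_le H k'.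
Proof.
move=> le_kk' H_le w; apply: le_trans (H_le w) _.
exact: ler_wpM2r (norm2_ge0 w) _ _ le_kk'.
Qed.

Lemma norm1_ge0 n (u : 'cV[R]_n) : 0 <= norm1 u.
Proof. exact: sumr_ge0. Qed.

Lemma norm2_le_norm1 n (u : 'cV[R]_n) : norm2 u <= norm1 u.
Proof.
rewrite -ler_sqr ?nnegrE ?norm2_ge0 ?norm1_ge0 // sqr_norm2 expr2.
rewrite /dotv {2}/norm1 mulr_sumr; apply: ler_sum => i _.
apply: le_trans (ler_norm _) _.
rewrite normrM ler_wpM2r // /norm1 (bigD1 i) //= lerDl.
exact: sumr_ge0.
Qed.

Lemma norm1_le_normr n (u : 'cV[R]_n) : norm1 u <= n%:R * `|u|.
Proof.
rewrite mulr_natl -[n in _ *+ n]card_ord -sumr_const; apply: ler_sum => i _.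
by rewrite [`|u|]mx_normrE (le_bigmax _ _ (i, 0)).
Qed.

End Euclidean.

Lemma eventually_constant_of_discrete_descent (R : realType)
    (p : nat -> R) (lb delta : R) :
  0 < delta -> (forall k, lb <= p k) ->
  (forall k, p k.+1 = p k \/ p k.+1 + delta <= p k) ->
  exists K, forall k, (K <= k)%N -> p k = p K.
Proof.
move=> delta_gt0 p_ge step.
have /nonincreasing_seqP p_noninc : forall k, p k.+1 <= p k.
  by move=> k; case: (step k) => [->|]; lra.
apply: contrapT => not_const.
have moves K : exists2 k, (K <= k)%N & p k.+1 + delta <= p k.
  apply: contrapT => stays; apply: not_const; exists K => k /subnKC <-.
  elim: (_ - K)%N => [|j IH]; first by rewrite addn0.
  rewrite addnS; case: (step (K + j)%N) => [->//|drop].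
  by case: stays; exists (K + j)%N; rewrite ?leq_addr.
have descent j : exists k, p k + j%:R * delta <= p 0.
  elim: j => [|j [k IH]]; first by exists 0%N; rewrite mul0r addr0.
  have [k' kk' drop] := moves k; have le_k := p_noninc _ _ kk'.
  by exists k'.+1; rewrite -natr1 mulrDl mul1r; lra.
have bound_ge0 : 0 <= (p 0 - lb) / delta
  by rewrite divr_ge0 ?subr_ge0 ?p_ge ?ltW.
have [k] := descent (Num.Def.archi_bound ((p 0 - lb) / delta)).
have := archi_boundP bound_ge0; rewrite ltr_pdivrMr //.
have := p_ge k; lra.
Qed.

Section MeritParameter.
Variable R : realType.
Variables (n m : nat) (eps sigma Cd : R).
Hypotheses (eps_gt0 : 0 < eps) (eps_lt1 : eps < 1) (sigma_lt1 : sigma < 1).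
Hypothesis Cd_gt0 : 0 < Cd.

(* The lower bound: [trial = (1 - sigma) ||c||_1 / den >= (1 - sigma) / Cd]. *)
Lemma tau_update_cases tau_prev (g : 'cV[R]_n) H d (cx : 'cV[R]_m) :
  dotv g d + Num.max (dotv d (H *m d)) 0 <= Cd * norm1 cx ->
  let tau := tau_update eps sigma tau_prev g H d cx in
  tau = tau_prev \/
  tau <= (1 - eps) * tau_prev /\ (1 - eps) * ((1 - sigma) / Cd) <= tau.
Proof.
rewrite /tau_update /=; set den := (X in X <= Cd * _) => den_le.
have [|den_gt0] := leP den 0; first by left.
set trial := (1 - sigma) * norm1 cx / den.
have [|prev_gt] := leP tau_prev trial; first by left.
have trial_ge : (1 - sigma) / Cd <= trial.
  rewrite ler_pdivrMr // /trial mulrAC ler_pdivlMr //.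
  by rewrite -mulrA ler_pM2l ?subr_gt0 // mulrC.
by right; split; rewrite ler_pM2l ?subr_gt0 // ltW.
Qed.

Lemma merit_parameter_eventually_constant (tau_init : R) (tau : nat -> R)
    (g d : nat -> 'cV[R]_n) (H : nat -> 'M[R]_n) (cx : nat -> 'cV[R]_m) :
  0 < tau_init ->
  (forall k, dotv (g k) (d k) + Num.max (dotv (d k) (H k *m d k)) 0
             <= Cd * norm1 (cx k)) ->
  (forall k, tau k = tau_update eps sigma (prevv tau_init tau k)
                       (g k) (H k) (d k) (cx k)) ->
  exists (ktau : nat) (tau_min : R), 0 < tau_min /\
    forall k, (ktau <= k)%N -> tau k = tau_min.
Proof.
move=> tau_init_gt0 den_le tauE; set p := prevv tau_init tau.
have pS k : p k.+1 = tau k by [].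
set lb := Num.min tau_init ((1 - eps) * ((1 - sigma) / Cd)).
have lb_gt0 : 0 < lb.
  by rewrite lt_min tau_init_gt0 mulr_gt0 ?divr_gt0 ?subr_gt0.
have cases k : p k.+1 = p k \/
    p k.+1 <= (1 - eps) * p k /\ (1 - eps) * ((1 - sigma) / Cd) <= p k.+1.
  by rewrite pS tauE; exact: tau_update_cases.
have p_ge k : lb <= p k.
  elim: k => [|k IH]; first by rewrite ge_min lexx.
  by case: (cases k) => [->//|[_ ge]]; rewrite ge_min ge orbT.
have step k : p k.+1 = p k \/ p k.+1 + eps * lb <= p k.
  case: (cases k) => [|[le _]]; [by left | right].
  have := p_ge k; have := ler_wpM2l (ltW eps_gt0) (p_ge k); lra.
have [K p_const] :=
  eventually_constant_of_discrete_descent (mulr_gt0 eps_gt0 lb_gt0) p_ge step.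
exists K, (p K); split; first exact: lt_le_trans lb_gt0 (p_ge K).
by move=> k Kk; rewrite -pS p_const ?leqW.
Qed.

End MeritParameter.

Lemma ler_cancel_sqr (R : realDomainType) (a b t : R) :
  0 <= t -> 0 <= b -> a * t ^+ 2 <= t * b -> a * t <= b.
Proof.
move=> t_ge0 b_ge0; have [t_gt0|] := ltrP 0 t.
  by rewrite expr2 mulrA [t * b]mulrC ler_pM2r.
move=> t_le0 _; have -> : t = 0 by apply/eqP; rewrite eq_le t_le0.
by rewrite mulr0.
Qed.

Section NewtonSystem.
Variable R : realType.
Variables (n m : nat) (J : 'M[R]_(m, n)) (H : 'M[R]_n).
Variables (g d u v : 'cV[R]_n) (y c : 'cV[R]_m) (s kappa zeta : R).
Hypothesis newton_eq : H *m d + J^T *m y = - g.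
Hypothesis linearized_feas : J *m d = - c.
Hypothesis d_split : d = u + v.
Hypothesis u_null : J *m u = 0.
Hypothesis v_range : exists w, v = J^T *m w.
Hypotheses (s_gt0 : 0 < s) (J_sing : sing_vals_ge J s).
Hypotheses (kappa_ge0 : 0 <= kappa) (H_le : opnorm2_le H kappa).
Hypotheses (zeta_ge0 : 0 <= zeta) (H_curv : zeta * norm2 u ^+ 2 <= dotv u (H *m u)).

Let J_v : J *m v = - c.
Proof. by rewrite -linearized_feas d_split mulmxDr u_null add0r. Qed.

Lemma dotv_H_le p (w : 'cV[R]_n) : dotv p (H *m w) <= kappa * norm2 p * norm2 w.
Proof.
apply: le_trans (dotv_le _ _) _; rewrite -mulrA [kappa * _]mulrC -mulrA.
by rewrite ler_wpM2l ?norm2_ge0 // mulrC.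
Qed.

Lemma range_component_le : s * norm2 v <= norm2 c.
Proof.
have [w vE] := v_range.
have w_le : s * norm2 w <= norm2 v by rewrite vE.
have v_sq : norm2 v ^+ 2 <= norm2 c * norm2 w.
  by rewrite sqr_norm2 {2}vE dotv_mulmx trmxK J_v -[norm2 c]norm2N dotv_le.
apply: ler_cancel_sqr; rewrite ?norm2_ge0 //.
apply: le_trans (ler_wpM2l (ltW s_gt0) v_sq) _.
rewrite mulrCA [norm2 v * _]mulrC; exact: ler_wpM2l (norm2_ge0 c) _ _ w_le.
Qed.

Lemma null_component_le : zeta * norm2 u <= norm2 g + kappa * norm2 v.
Proof.
have Hu : H *m u = - g - J^T *m y - H *m v.
  by rewrite -newton_eq addrK d_split mulmxDr addrK.
have uHu : dotv u (H *m u) = - dotv u g - dotv u (H *m v).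
  by rewrite Hu !dotvDr !dotvNr dotv_mulmx trmxK u_null dotv0l subr0.
have u_g : - dotv u g <= norm2 u * norm2 g.
  by rewrite -dotvNr -(norm2N g) dotv_le.
have u_Hv : - dotv u (H *m v) <= kappa * norm2 u * norm2 v.
  by rewrite -dotvNr -mulmxN -(norm2N v) dotv_H_le.
apply: ler_cancel_sqr; rewrite ?addr_ge0 ?mulr_ge0 ?norm2_ge0 //.
have := H_curv; rewrite uHu; lra.
Qed.

Lemma multiplier_le : s * norm2 y <= norm2 g + kappa * norm2 d.
Proof.
have JTy : J^T *m y = - g - H *m d by rewrite -newton_eq [H *m d + _]addrC addrK.
apply: le_trans (J_sing y) _; rewrite JTy.
by apply: le_trans (ler_norm2B _ _) _; rewrite norm2N lerD2l.
Qed.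

Lemma merit_den_le :
  dotv g d + Num.max (dotv d (H *m d)) 0
  <= (kappa * (norm2 u + norm2 d) / s + norm2 y) * norm1 c.
Proof.
set a := dotv d (H *m d).
have gd : dotv g d = - a + dotv c y.
  rewrite -[g]opprK -newton_eq dotvNl dotvDl (dotvC (H *m d)) -/a.
  by rewrite (dotvC _ d) dotv_mulmx trmxK linearized_feas dotvNl opprD opprK.
have aE : a = dotv u (H *m u) + dotv u (H *m v) + dotv v (H *m d).
  by rewrite /a {1}d_split dotvDl {1}d_split mulmxDr dotvDr.
have uHu : 0 <= dotv u (H *m u).
  exact: le_trans (mulr_ge0 zeta_ge0 (sqr_ge0 _)) H_curv.
have u_Hv : - dotv u (H *m v) <= kappa * norm2 u * norm2 v.
  by rewrite -dotvNr -mulmxN -(norm2N v) dotv_H_le.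
have v_Hd : - dotv v (H *m d) <= kappa * norm2 v * norm2 d.
  by rewrite -dotvNr -mulmxN -(norm2N d) dotv_H_le.
have cy : dotv c y <= norm1 c * norm2 y.
  exact: le_trans (dotv_le _ _) (ler_wpM2r (norm2_ge0 _) (norm2_le_norm1 _)).
have kud_ge0 : 0 <= kappa * (norm2 u + norm2 d).
  exact: mulr_ge0 kappa_ge0 (addr_ge0 (norm2_ge0 _) (norm2_ge0 _)).
have coef_ge0 : 0 <= kappa * (norm2 u + norm2 d) / s * norm1 c.
  exact: mulr_ge0 (divr_ge0 kud_ge0 (ltW s_gt0)) (norm1_ge0 c).
have v_le : kappa * (norm2 u + norm2 d) * norm2 v
            <= kappa * (norm2 u + norm2 d) * (norm1 c / s).
  apply: ler_wpM2l => //; rewrite ler_pdivlMr // mulrC.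
  exact: le_trans range_component_le (norm2_le_norm1 _).
by rewrite gd; have [a_le0|a_gt0] := leP a 0; lra.
Qed.

End NewtonSystem.

Section UniformBounds.
Variable R : realType.
Variables (n m : nat) (J : nat -> 'M[R]_(m, n)) (H : nat -> 'M[R]_n).
Variables (g d u v : nat -> 'cV[R]_n) (y c : nat -> 'cV[R]_m).
Variables (s kappa zeta G C : R).
Hypothesis newton_eq : forall k, H k *m d k + (J k)^T *m y k = - g k.
Hypothesis linearized_feas : forall k, J k *m d k = - c k.
Hypothesis d_split : forall k, d k = u k + v k.
Hypothesis u_null : forall k, J k *m u k = 0.
Hypothesis v_range : forall k, exists w, v k = (J k)^T *m w.
Hypotheses (s_gt0 : 0 < s) (J_sing : forall k, sing_vals_ge (J k) s).
Hypotheses (kappa_ge0 : 0 <= kappa) (H_le : forall k, opnorm2_le (H k) kappa).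
Hypothesis zeta_gt0 : 0 < zeta.
Hypothesis H_curv : forall k, zeta * norm2 (u k) ^+ 2 <= dotv (u k) (H k *m u k).
Hypotheses (g_le : forall k, norm2 (g k) <= G) (c_le : forall k, norm1 (c k) <= C).

Let V := C / s.
Let U := (G + kappa * V) / zeta.
Let Y := (G + kappa * (U + V)) / s.

Let v_le k : norm2 (v k) <= V.
Proof.
rewrite ler_pdivlMr // mulrC.
apply: le_trans (range_component_le (linearized_feas k) (d_split k) (u_null k)
  (v_range k) s_gt0 (J_sing k)) _.
exact: le_trans (norm2_le_norm1 _) (c_le k).
Qed.

Lemma null_components_bounded k : norm2 (u k) <= U.
Proof.
rewrite ler_pdivlMr // mulrC.
apply: le_trans (null_component_le (newton_eq k) (d_split k) (u_null k)
  kappa_ge0 (H_le k) (H_curv k)) _.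
exact: lerD (g_le k) (ler_wpM2l kappa_ge0 (v_le k)).
Qed.

Let d_le k : norm2 (d k) <= U + V.
Proof.
rewrite d_split; apply: le_trans (ler_norm2D _ _) _.
exact: lerD (null_components_bounded k) (v_le k).
Qed.

Let y_le k : norm2 (y k) <= Y.
Proof.
rewrite ler_pdivlMr // mulrC.
apply: le_trans (multiplier_le (newton_eq k) (J_sing k) (H_le k)) _.
exact: lerD (g_le k) (ler_wpM2l kappa_ge0 (d_le k)).
Qed.

Lemma merit_den_bounded : exists2 Cd, 0 < Cd &
  forall k, dotv (g k) (d k) + Num.max (dotv (d k) (H k *m d k)) 0
            <= Cd * norm1 (c k).
Proof.
have Y_ge0 : 0 <= Y := le_trans (norm2_ge0 _) (y_le 0).
have UV_ge0 : 0 <= U + V := le_trans (norm2_ge0 _) (d_le 0).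
have U_ge0 : 0 <= U := le_trans (norm2_ge0 _) (null_components_bounded 0).
have coef_ge0 : 0 <= kappa * (U + (U + V)) / s.
  exact: divr_ge0 (mulr_ge0 kappa_ge0 (addr_ge0 U_ge0 UV_ge0)) (ltW s_gt0).
exists (kappa * (U + (U + V)) / s + Y + 1) => [|k]; first lra.
apply: le_trans (merit_den_le (newton_eq k) (linearized_feas k) (d_split k) (u_null k)
  (v_range k) s_gt0 (J_sing k) kappa_ge0 (H_le k) (ltW zeta_gt0) (H_curv k)) _.
apply: ler_wpM2r (norm1_ge0 _) _ _ _.
have : kappa * (norm2 (u k) + norm2 (d k)) / s <= kappa * (U + (U + V)) / s.
  rewrite ler_pM2r ?invr_gt0 //; apply: ler_wpM2l kappa_ge0 _ _ _.
  exact: lerD (null_components_bounded k) (d_le k).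
have := y_le k; lra.
Qed.

End UniformBounds.

Local Open Scope classical_set_scope.

Theorem proposition3p17
  (R : realType) (n m : nat)
  (* problem data *)
  (X : set 'cV[R]_n) (f : 'cV[R]_n -> R) (gf : 'cV[R]_n -> 'cV[R]_n)
  (c : 'cV[R]_n -> 'cV[R]_m) (J : 'cV[R]_n -> 'M[R]_(m, n))
  (L : R) (gam : 'I_m -> R)
  (* Matrix Assumption data *)
  (H : nat -> 'M[R]_n) (kappaH zeta : R)
  (* algorithm inputs *)
  (x0 : 'cV[R]_n) (tau_init eps sigma xi_init : R) (beta : nat -> R) (theta : R)
  (* algorithm sequences *)
  (x : nat -> 'cV[R]_n) (gbar : nat -> 'cV[R]_n) (d : nat -> 'cV[R]_n)
  (y : nat -> 'cV[R]_m) (tau xi alpha : nat -> R)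
  (ubar v : nat -> 'cV[R]_n)
  (gmax : R) :
  (* Standing Assumption *)
  open X -> convex_set X ->
  (forall k, X (x k)) ->
  (forall z, X z -> differentiable f z /\
     forall h, 'd f z h = dotv (gf z) h) ->
  {within X, continuous gf} ->
  (exists lb, forall z, X z -> lb <= f z) ->
  (exists B, forall z, X z -> `|gf z| <= B) ->
  0 < L ->
  (forall z w, X z -> X w -> norm2 (gf z - gf w) <= L * norm2 (z - w)) ->
  (exists B, forall z, X z -> `|c z| <= B) ->
  (exists B, forall z, X z -> `|J z| <= B) ->
  (forall i : 'I_m, forall z, X z -> differentiable (fun w => c w i 0) z /\
     forall h, 'd (fun w => c w i 0) z h = dotv (row i (J z))^T h) ->
  (forall i, 0 <= gam i) ->
  (forall i z w, X z -> X w ->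
     norm2 ((row i (J z))^T - (row i (J w))^T) <= gam i * norm2 (z - w)) ->
  (exists s, 0 < s /\ forall z, X z -> sing_vals_ge (J z) s) ->
  (* Matrix Assumption *)
  0 < zeta ->
  (forall k, (H k)^T = H k) ->
  (forall k, opnorm2_le (H k) kappaH) ->
  (forall k u, J (x k) *m u = 0 -> zeta * norm2 u ^+ 2 <= dotv u (H k *m u)) ->
  (* algorithm inputs *)
  0 < tau_init -> 0 < eps < 1 -> 0 < sigma < 1 -> 0 < xi_init ->
  (forall k, 0 < beta k <= 1) -> 0 <= theta ->
  (* Algorithm 3 *)
  x 0%N = x0 ->
  (forall k, H k *m d k + (J (x k))^T *m y k = - gbar k) ->
  (forall k, J (x k) *m d k = - c (x k)) ->
  (forall k, d k != 0) ->
  (forall k, tau k = tau_update eps sigma (prevv tau_init tau k)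
                       (gbar k) (H k) (d k) (c (x k))) ->
  (forall k, xi k = xi_update eps (prevv xi_init xi k)
       (dq (tau k) (gbar k) (H k) (d k) (c (x k)) / (tau k * norm2 (d k) ^+ 2))) ->
  (forall k, alpha k = alpha_sel L (\sum_i gam i) theta (beta k) (tau k) (xi k)
                         (gbar k) (H k) (d k) (c (x k))) ->
  (forall k, x k.+1 = x k + alpha k *: d k) ->
  (* decomposition *)
  (forall k, d k = ubar k + v k) ->
  (forall k, J (x k) *m ubar k = 0) ->
  (forall k, exists w, v k = (J (x k))^T *m w) ->
  (* stochastic gradient error bound *)
  0 < gmax ->
  (forall k, norm2 (gbar k - gf (x k)) <= gmax) ->
  (exists B, forall k, norm2 (ubar k) <= B) /\
  (exists (ktau : nat) (tau_min : R), 0 < tau_min /\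
     forall k, (ktau <= k)%N -> tau k = tau_min).
Proof.
move=> _ _ x_in _ _ _ [Bg gf_le] _ _ [Bc c_le] _ _ _ _ [s [s_gt0 J_sing]]
  zeta_gt0 _ H_le H_curv tau_init_gt0 /andP[eps_gt0 eps_lt1] /andP[_ sigma_lt1]
  _ _ _ _ newton_eq feas _ tauE _ _ _ d_split u_null v_range _ gbar_err.
have kappa_ge0 : 0 <= Num.max kappaH 0 by rewrite le_max lexx orbT.
have H_le' k : opnorm2_le (H k) (Num.max kappaH 0).
  by apply: opnorm2_leW (H_le k); rewrite le_max lexx.
have gbar_le k : norm2 (gbar k) <= gmax + n%:R * Bg.
  rewrite -(subrK (gf (x k)) (gbar k)); apply: le_trans (ler_norm2D _ _) _.
  apply: lerD (gbar_err k) (le_trans (norm2_le_norm1 _) _).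
  exact: le_trans (norm1_le_normr _) (ler_wpM2l (ler0n _ _) (gf_le _ (x_in k))).
have c_le' k : norm1 (c (x k)) <= m%:R * Bc.
  exact: le_trans (norm1_le_normr _) (ler_wpM2l (ler0n _ _) (c_le _ (x_in k))).
have J_sing' k := J_sing _ (x_in k).
have H_curv' k := H_curv k _ (u_null k).
split.
  by eexists; apply: (null_components_bounded (J := fun k => J (x k))
    (c := fun k => c (x k)) newton_eq feas d_split u_null v_range s_gt0
    J_sing' kappa_ge0 H_le' zeta_gt0 H_curv' gbar_le c_le').
have [Cd Cd_gt0 den_le] := merit_den_bounded (J := fun k => J (x k))
  (c := fun k => c (x k)) newton_eq feas d_split u_null v_range s_gt0
  J_sing' kappa_ge0 H_le' zeta_gt0 H_curv' gbar_le c_le'.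
exact: (merit_parameter_eventually_constant (cx := fun k => c (x k))
  eps_gt0 eps_lt1 sigma_lt1 Cd_gt0 tau_init_gt0 den_le tauE).
Qed.
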